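(* Let $(\Omega,\mathcal E_\Omega)$ be a finite-dimensional generalized probabilistic theory whose state space $\Omega$ is transitive and whose positive cone $V_+$ is self-dual with respect to $\langle\cdot,\cdot\rangle_{GL(\Omega)}$. Let $F=\{f_a\}_{a\in A}$ and $G=\{g_b\}_{b\in B}$ be ideal observables on $\Omega$ with finite outcome sets $A,B$, and let $\widetilde M^{FG}=\{\widetilde m^{FG}_{ab}\}_{(a,b)\in A\times B}$ be an arbitrary observable on $A\times B$ with marginals $\widetilde M^F=\{\sum_b\widetilde m^{FG}_{ab}\}_a$, $\widetilde M^G=\{\sum_a\widetilde m^{FG}_{ab}\}_b$. Then there exists a state $\omega\in\Omega$ such that $$D_\infty(\widetilde M^F,F)+D_\infty(\widetilde M^G,G)\ge LE(\omega^F)+LE(\omega^G).$$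
   Context: Setting: $V=\mathbb R^{N+1}$ with Euclidean inner product $(\cdot,\cdot)_E$. A state space $\Omega\subset V$ is a compact convex set with $\mathrm{span}(\Omega)=V$ and $0\notin\mathrm{aff}(\Omega)$; $V_+=\{\lambda\omega:\lambda\ge0,\omega\in\Omega\}$; the unit effect $u\in V^*$ satisfies $u(\omega)=1$ on $\Omega$; effects are $\mathcal E_\Omega=\{e\in V^*:0\le e(\omega)\le1\ \forall\omega\in\Omega\}$. An observable with finite outcome set $X$ is a family of effects $\{e_x\}_{x\in X}$ with $\sum_xe_x=u$ (the trivial observable $\{u\}$ is excluded). An effect is pure if it is an extreme point of $\mathcal E_\Omega$; indecomposable if $e\ne0$ and $e=e_1+e_2$ with $e_1,e_2\in\mathcal E_\Omega$ forces $e_1,e_2$ to be scalar multiples of $e$. $F=\{f_a\}$ is ideal if each $f_a$ equals $\sum_{i\in I_a}e_i$ or $u-\sum_{i\in I_a}e_i$ for a finite family of pure indecomposable effects. $GL(\Omega)$: group of linear bijections $T$ of $V$ with $T(\Omega)=\Omega$, $\mu$ its normalized Haar measure, $\langle x,y\rangle_{GL(\Omega)}=\int(Tx,Ty)_E\,d\mu(T)$. $\Omega$ is transitive if $GL(\Omega)$ acts transitively on the extreme points of $\Omega$; $V_+$ is self-dual w.r.t. $\langle\cdot,\cdot\rangle_{GL(\Omega)}$ if $V_+=\{y:\langle x,y\rangle_{GL(\Omega)}\ge0\ \forall x\in V_+\}$. $\omega^F=\{f_a(\omega)\}_a$. Minimum localization error: $LE(\omega^F)=1-\max_{a\in A}f_a(\omega)$.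 $l_\infty$ distance: $D_\infty(\widetilde F,F)=\sup_{\omega\in\Omega}\max_{a\in A}|\widetilde f_a(\omega)-f_a(\omega)|$. *)

From HB Require Import structures.
From mathcomp Require Import all_boot all_order all_algebra.
From mathcomp Require Import all_classical all_reals all_analysis.
Set Implicit Arguments. Unset Strict Implicit. Unset Printing Implicit Defensive.
Import Order.TTheory GRing.Theory Num.Theory.
Import numFieldNormedType.Exports.
Local Open Scope classical_set_scope.
Local Open Scope ring_scope.

(* V = R^(N+1) is represented by row vectors 'rV[R]_n (n = N.+1).
   Dual vectors (effects) are represented by row vectors too, via the
   Euclidean pairing e(w) = (e, w)_E. *)
Definition dotE (R : realType) (n : nat) (x y : 'rV[R]_n) : R :=
  \sum_(i < n) x 0 i * y 0 i.

Definition ev (R : realType) (n : nat) (e w : 'rV[R]_n) : R := dotE e w.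

Definition convex_set (R : realType) (n : nat) (C : set 'rV[R]_n) : Prop :=
  forall x y t, C x -> C y -> 0 <= t <= 1 -> C (t *: x + (1 - t) *: y).

Definition extreme_point (R : realType) (n : nat) (C : set 'rV[R]_n)
  (x : 'rV[R]_n) : Prop :=
  C x /\ forall y z t, C y -> C z -> 0 < t < 1 ->
    x = t *: y + (1 - t) *: z -> y = x /\ z = x.

Definition spans (R : realType) (n : nat) (C : set 'rV[R]_n) : Prop :=
  forall v : 'rV[R]_n, exists k (p : 'I_k -> 'rV[R]_n) (c : 'I_k -> R),
    (forall i, C (p i)) /\ v = \sum_(i < k) c i *: p i.

Definition in_aff (R : realType) (n : nat) (C : set 'rV[R]_n)
  (v : 'rV[R]_n) : Prop :=
  exists k (p : 'I_k -> 'rV[R]_n) (c : 'I_k -> R),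
    (forall i, C (p i)) /\ \sum_(i < k) c i = 1 /\ v = \sum_(i < k) c i *: p i.

Definition state_space (R : realType) (n : nat) (Om : set 'rV[R]_n) : Prop :=
  compact Om /\ convex_set Om /\ spans Om /\ ~ in_aff Om 0.

Definition unit_effect (R : realType) (n : nat) (Om : set 'rV[R]_n)
  (u : 'rV[R]_n) : Prop := forall w, Om w -> ev u w = 1.

Definition effects (R : realType) (n : nat) (Om : set 'rV[R]_n) : set 'rV[R]_n :=
  [set e | forall w, Om w -> 0 <= ev e w <= 1].

(* observable with finite outcome set X (trivial observable {u}, i.e. a
   single outcome, excluded) *)
Definition observable (R : realType) (n : nat) (Om : set 'rV[R]_n)
  (u : 'rV[R]_n) (X : finType) (e : X -> 'rV[R]_n) : Prop :=
  (forall x, effects Om (e x)) /\ \sum_(x : X) e x = u /\ (1 < #|X|)%N.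

Definition pure_effect (R : realType) (n : nat) (Om : set 'rV[R]_n)
  (e : 'rV[R]_n) : Prop := extreme_point (effects Om) e.

Definition indecomposable (R : realType) (n : nat) (Om : set 'rV[R]_n)
  (e : 'rV[R]_n) : Prop :=
  e <> 0 /\ forall e1 e2, effects Om e1 -> effects Om e2 -> e = e1 + e2 ->
    (exists c : R, e1 = c *: e) /\ (exists c : R, e2 = c *: e).

Definition ideal_observable (R : realType) (n : nat) (Om : set 'rV[R]_n)
  (u : 'rV[R]_n) (X : finType) (f : X -> 'rV[R]_n) : Prop :=
  observable Om u f /\
  forall a, exists k (es : 'I_k -> 'rV[R]_n),
    (forall i, pure_effect Om (es i) /\ indecomposable Om (es i)) /\
    (f a = \sum_(i < k) es i \/ f a = u - \sum_(i < k) es i).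

Definition GLset (R : realType) (n : nat) (Om : set 'rV[R]_n) : set 'M[R]_n :=
  [set T | T \in unitmx /\ (fun w => w *m T) @` Om = Om].

Definition transitive_ss (R : realType) (n : nat) (Om : set 'rV[R]_n) : Prop :=
  forall x y, extreme_point Om x -> extreme_point Om y ->
    exists T, GLset Om T /\ x *m T = y.

Definition Mx (R : realType) (n : nat) := g_sigma_algebraType (@open 'M[R]_n).

(* mu is the normalized Haar measure of GL(Om): a Borel probability measure on
   matrices, carried by GL(Om), and invariant under (left) translations by
   elements of GL(Om).  (Such a measure is unique.) *)
Definition haar_GL (R : realType) (n : nat) (Om : set 'rV[R]_n)
  (mu : probability (Mx R n) R) : Prop :=
  mu (GLset Om : set (Mx R n)) = 1%E /\
  forall S, GLset Om S -> forall Y : set (Mx R n), measurable Y ->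
    mu ((fun T : Mx R n => (S *m T : 'M[R]_n) : Mx R n) @^-1` Y) = mu Y.

Definition ipGL (R : realType) (n : nat) (mu : probability (Mx R n) R)
  (x y : 'rV[R]_n) : R :=
  Rintegral mu setT (fun T : Mx R n => dotE (x *m (T : 'M[R]_n)) (y *m (T : 'M[R]_n))).

Definition pos_cone (R : realType) (n : nat) (Om : set 'rV[R]_n) : set 'rV[R]_n :=
  [set v | exists (l : R) w, 0 <= l /\ Om w /\ v = l *: w].

Definition self_dual (R : realType) (n : nat) (Om : set 'rV[R]_n)
  (mu : probability (Mx R n) R) : Prop :=
  pos_cone Om = [set y | forall x, pos_cone Om x -> 0 <= ipGL mu x y].

Definition LE (R : realType) (n : nat) (X : finType) (f : X -> 'rV[R]_n)
  (w : 'rV[R]_n) : R :=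
  1 - \big[Num.max/0]_(a : X) ev (f a) w.

Definition Dinf (R : realType) (n : nat) (Om : set 'rV[R]_n) (X : finType)
  (ft f : X -> 'rV[R]_n) : R :=
  sup [set r | exists w, Om w /\ r = \big[Num.max/0]_(a : X) `|ev (ft a) w - ev (f a) w|].

Definition marginal1 (R : realType) (n : nat) (A B : finType)
  (m : (A * B)%type -> 'rV[R]_n) : A -> 'rV[R]_n :=
  fun a => \sum_(b : B) m (a, b).
Definition marginal2 (R : realType) (n : nat) (A B : finType)
  (m : (A * B)%type -> 'rV[R]_n) : B -> 'rV[R]_n :=
  fun b => \sum_(a : A) m (a, b).

From HB Require Import structures.
From mathcomp Require Import all_boot all_order all_algebra.
From mathcomp Require Import all_classical all_reals all_analysis.
From mathcomp Require Import ring lra measurable_realfun.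
Import Order.TTheory GRing.Theory Num.Theory.
Import numFieldNormedType.Exports.
Local Open Scope classical_set_scope.
Local Open Scope ring_scope.
Set Implicit Arguments. Unset Strict Implicit. Unset Printing Implicit Defensive.

(* Self-duality with respect to the Haar-averaged inner product B x y = x Q y^T
   makes the Gram matrix Q invertible, so every effect e is represented by the
   cone vector rep e = e Q^-1, with e(w) = B (rep e) w.  Transitivity and
   invariance give all pure states the same norm, so by Cauchy-Schwarz a pure
   state om maximizes B om over the state space.  For a pure indecomposable
   effect e, rep e is a multiple of a pure state om, and e(om) = 1 by purity;
   hence e(rep e) = u(rep e), an identity inherited by the effects of ideal
   observables.  Pairing the joint observable m with these representatives,
   u(rep u) - sum_ab f_a(rep m_ab) = sum_a (f_a - m^F_a)(rep f_a)
                                  <= D(M^F, F) u(rep u),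
   and likewise for G.  If every state w had LE_F(w) + LE_G(w) > D_F + D_G,
   the functionals (2 - D_F - D_G) u - f_a - g_b would be positive on states,
   so the two inequalities would force every rep m_ab, hence u, to vanish. *)

Section Evaluation.
Variables (R : realType) (n : nat).
Implicit Types (e w : 'rV[R]_n).

Lemma evE e w : ev e w = (e *m w^T) 0 0.
Proof. by rewrite /ev /dotE mxE; apply: eq_bigr => i _; rewrite mxE. Qed.

Lemma ev_sym e w : ev e w = ev w e.
Proof. by apply: eq_bigr => i _; rewrite mulrC. Qed.

Lemma evDl e1 e2 w : ev (e1 + e2) w = ev e1 w + ev e2 w.
Proof. by rewrite !evE mulmxDl mxE. Qed.

Lemma evZl c e w : ev (c *: e) w = c * ev e w.
Proof. by rewrite !evE -scalemxAl mxE. Qed.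

Lemma evNl e w : ev (- e) w = - ev e w.
Proof. by rewrite -scaleN1r evZl mulN1r. Qed.

Lemma evBl e1 e2 w : ev (e1 - e2) w = ev e1 w - ev e2 w.
Proof. by rewrite evDl evNl. Qed.

Lemma ev0l w : ev 0 w = 0.
Proof. by rewrite -(scale0r 0) evZl mul0r. Qed.

Lemma ev_suml (I : finType) (f : I -> 'rV[R]_n) w :
  ev (\sum_i f i) w = \sum_i ev (f i) w.
Proof. by rewrite evE mulmx_suml summxE; apply: eq_bigr => i _; rewrite evE. Qed.

Lemma evDr e w1 w2 : ev e (w1 + w2) = ev e w1 + ev e w2.
Proof. by rewrite !(ev_sym e) evDl. Qed.

Lemma evZr c e w : ev e (c *: w) = c * ev e w.
Proof. by rewrite !(ev_sym e) evZl. Qed.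

Lemma evNr e w : ev e (- w) = - ev e w.
Proof. by rewrite !(ev_sym e) evNl. Qed.

Lemma evBr e w1 w2 : ev e (w1 - w2) = ev e w1 - ev e w2.
Proof. by rewrite !(ev_sym e) evBl. Qed.

Lemma ev0r e : ev e 0 = 0.
Proof. by rewrite ev_sym ev0l. Qed.

Lemma ev_sumr (I : finType) e (f : I -> 'rV[R]_n) :
  ev e (\sum_i f i) = \sum_i ev e (f i).
Proof. by rewrite ev_sym ev_suml; apply: eq_bigr => i _; rewrite ev_sym. Qed.

End Evaluation.

Lemma ler_sum_term (R : numDomainType) (I : finType) (F : I -> R) j :
  (forall i, 0 <= F i) -> F j <= \sum_i F i.
Proof. by move=> F_ge0; rewrite (bigD1 j) //= lerDl sumr_ge0. Qed.

Lemma sum_prod (V : nmodType) (A B : finType) (F : A * B -> V) :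
  \sum_p F p = \sum_a \sum_b F (a, b).
Proof. by rewrite pair_bigA; apply: eq_bigr => -[]. Qed.

Lemma sum_swap (V : nmodType) (A B : finType) (F : A * B -> V) :
  \sum_(p : B * A) F (p.2, p.1) = \sum_p F p.
Proof. by rewrite !sum_prod exchange_big. Qed.

Section MatrixContinuity.
Variables (R : realType) (T : topologicalType).

Lemma continuous_sum (I : finType) (f : I -> T -> R) :
  (forall i, continuous (f i)) -> continuous (fun x => \sum_i f i x).
Proof.
move=> f_cont; rewrite -fct_sumE.
apply: (big_ind (fun g : T -> R => continuous g)) => [x|g h g_cont h_cont x|i _].
- exact: cst_continuous.
- exact: continuousD (g_cont x) (h_cont x).
- exact: f_cont.
Qed.

Lemma continuous_mx p q (f : T -> 'M[R]_(p, q)) :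
  (forall i j, continuous (fun x => f x i j)) -> continuous f.
Proof.
move=> f_cont x A [P P_nbhs sPA].
have : \forall y \near x, forall ij : 'I_p * 'I_q, P ij.1 ij.2 (f y ij.1 ij.2).
  by apply: filter_forall => -[i j]; exact: f_cont i j x _ (P_nbhs i j).
by apply: filterS => y Py; apply: sPA => i j; exact: (Py (i, j)).
Qed.

Lemma continuous_mx_entry p q i j (f : T -> 'M[R]_(p, q)) :
  continuous f -> continuous (fun x => f x i j).
Proof.
by move=> f_cont x; exact: continuous_comp (f_cont x) (@coord_continuous _ _ _ i j (f x)).
Qed.

Lemma continuous_mulmx p q r (f : T -> 'M[R]_(p, q)) (g : T -> 'M[R]_(q, r)) :
  continuous f -> continuous g -> continuous (fun x => f x *m g x).
Proof.
move=> f_cont g_cont; apply: continuous_mx => i j.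
under eq_fun do rewrite mxE.
apply: continuous_sum => k x.
have fik_cont := continuous_mx_entry (i:=i) (j:=k) f_cont.
have gkj_cont := continuous_mx_entry (i:=k) (j:=j) g_cont.
exact: continuousM (fik_cont x) (gkj_cont x).
Qed.

End MatrixContinuity.

Lemma continuous_mulmxl (R : realType) p q r (A : 'M[R]_(p, q)) :
  continuous (fun X : 'M[R]_(q, r) => A *m X).
Proof. by apply: continuous_mulmx => X; [exact: cst_continuous|]. Qed.

Lemma continuous_trmx (R : realType) p q : continuous (fun X : 'M[R]_(p, q) => X^T).
Proof.
apply: continuous_mx => i j.
have -> : (fun X : 'M[R]_(p, q) => X^T i j) = (fun X => X j i).
  by apply/funext => X; rewrite mxE.
exact: coord_continuous.
Qed.

Lemma continuous_mulmxr (R : realType) p q r (A : 'M[R]_(q, r)) :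
  continuous (fun X : 'M[R]_(p, q) => X *m A).
Proof. by apply: continuous_mulmx => X; [|exact: cst_continuous]. Qed.

Definition bform (R : realType) (n : nat) (Q : 'M[R]_n) (x y : 'rV[R]_n) : R :=
  ev (x *m Q) y.

Lemma continuous_bform_diag (R : realType) (n : nat) (Q : 'M[R]_n) :
  continuous (fun w : 'rV[R]_n => bform Q w w).
Proof.
have wQ_cont := continuous_mulmxr (p := 1) (A := Q).
rewrite /bform /ev /dotE; apply: continuous_sum => i w.
have wQi_cont := continuous_mx_entry (i:=0) (j:=i) wQ_cont.
exact: continuousM (wQi_cont w) (@coord_continuous _ _ _ 0 i w).
Qed.

Lemma bform_expand (R : realType) (n : nat) (Q : 'M[R]_n) x y :
  bform Q x y = \sum_(p : 'I_n * 'I_n) x 0 p.1 * y 0 p.2 * Q p.1 p.2.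
Proof.
rewrite /bform /ev /dotE sum_prod exchange_big; apply: eq_bigr => j _.
by rewrite mxE mulr_suml; apply: eq_bigr => i _; rewrite mulrAC.
Qed.

Lemma dotE_mulmx (R : realType) (n : nat) (x y : 'rV[R]_n) (T : 'M[R]_n) :
  dotE (x *m T) (y *m T) = bform (T *m T^T) x y.
Proof. by rewrite /bform -[dotE _ _]/(ev _ _) !evE trmx_mul !mulmxA. Qed.

Section SymmetricForm.
Variables (R : realType) (n : nat) (Q : 'M[R]_n).
Hypothesis Q_sym : Q^T = Q.
Implicit Types (x y z : 'rV[R]_n).
Local Notation B := (bform Q).

Lemma bform_sym x y : B x y = B y x.
Proof.
have entry_tr (M : 'M[R]_1) : M 0 0 = M^T 0 0 by rewrite mxE.
by rewrite /bform !evE entry_tr !trmx_mul trmxK Q_sym mulmxA.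
Qed.

Lemma bformDl x y z : B (x + y) z = B x z + B y z.
Proof. by rewrite /bform mulmxDl evDl. Qed.

Lemma bformZl c x y : B (c *: x) y = c * B x y.
Proof. by rewrite /bform -scalemxAl evZl. Qed.

Lemma bformBl x y z : B (x - y) z = B x z - B y z.
Proof. by rewrite /bform mulmxBl evBl. Qed.

Lemma bformDr x y z : B x (y + z) = B x y + B x z.
Proof. exact: evDr. Qed.

Lemma bformZr c x y : B x (c *: y) = c * B x y.
Proof. exact: evZr. Qed.

Lemma bformNr x y : B x (- y) = - B x y.
Proof. exact: evNr. Qed.

Lemma bformBr x y z : B x (y - z) = B x y - B x z.
Proof. exact: evBr. Qed.

Lemma bform_combE a b y z :
  B (a *: y + b *: z) (a *: y + b *: z) =
  a ^+ 2 * B y y + 2 * a * b * B y z + b ^+ 2 * B z z.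
Proof. by rewrite !(bformDl, bformDr, bformZl, bformZr) (bform_sym z y); ring. Qed.

Lemma bform_convex_combE t y z :
  B (t *: y + (1 - t) *: z) (t *: y + (1 - t) *: z) =
  t * B y y + (1 - t) * B z z - t * (1 - t) * B (y - z) (y - z).
Proof. by rewrite bform_combE !(bformBl, bformBr) (bform_sym z y); ring. Qed.

Hypothesis Q_psd : forall x, 0 <= B x x.

Lemma bform_quadratic_ge0 x y t : 0 <= B x x + 2 * t * B x y + t ^+ 2 * B y y.
Proof. by have := Q_psd (1 *: x + t *: y); rewrite bform_combE expr1n mul1r mulr1. Qed.

Lemma bform_CauchySchwarz x y : 0 < B y y -> B x y ^+ 2 <= B x x * B y y.
Proof.
move=> Byy_gt0; rewrite -subr_ge0.
have -> : B x x * B y y - B x y ^+ 2 =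
    B y y * (B x x + 2 * (- B x y / B y y) * B x y + (- B x y / B y y) ^+ 2 * B y y).
  by field; rewrite gt_eqF.
by apply: mulr_ge0; [exact: ltW | exact: bform_quadratic_ge0].
Qed.

Lemma bform_isotropic_orthogonal x y : B x x = 0 -> B x y = 0.
Proof.
move=> Bxx0; set b := B x y; set c := B y y.
have c_ge0 : 0 <= c := Q_psd y.
have c1_gt0 : 0 < c + 1 by lra.
have c2_gt0 : 0 < c + 2 by lra.
apply/eqP; rewrite -sqrf_eq0 eq_le sqr_ge0 andbT.
have := bform_quadratic_ge0 x y (- b / (c + 1)); rewrite Bxx0 add0r -/b -/c.
have -> : 2 * (- b / (c + 1)) * b + (- b / (c + 1)) ^+ 2 * c =
    - (b ^+ 2 * (c + 2)) / (c + 1) ^+ 2 by field; rewrite gt_eqF.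
by rewrite pmulr_lge0 ?invr_gt0 ?exprn_gt0 // oppr_ge0 pmulr_lle0.
Qed.

End SymmetricForm.

Section SelfDualForm.
Variables (R : realType) (n : nat) (Om : set 'rV[R]_n) (u : 'rV[R]_n).
Variable Q : 'M[R]_n.
Hypothesis Q_sym : Q^T = Q.
Hypothesis Q_psd : forall x, 0 <= bform Q x x.
Hypothesis Q_self_dual :
  pos_cone Om = [set y | forall x, pos_cone Om x -> 0 <= bform Q x y].
Hypothesis u_unit : unit_effect Om u.
Implicit Types (e f v w x y z : 'rV[R]_n).
Local Notation B := (bform Q).

Lemma state_pos_cone w : Om w -> pos_cone Om w.
Proof. by move=> Om_w; exists 1, w; rewrite scale1r ler01. Qed.

Lemma ev_unit_scale l w : Om w -> ev u (l *: w) = l.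
Proof. by move=> Om_w; rewrite evZr u_unit // mulr1. Qed.

Lemma state_neq0 w : Om w -> w != 0.
Proof.
move=> Om_w; apply/eqP => w0; have := u_unit Om_w.
by rewrite w0 ev0r => /eqP; rewrite eq_sym oner_eq0.
Qed.

Lemma state_scale_inj a b y z : Om y -> Om z -> a != 0 ->
  a *: y = b *: z -> y = z.
Proof.
move=> Om_y Om_z a_neq0 yz; have := congr1 (ev u) yz.
by rewrite !ev_unit_scale // => ab; move: yz; rewrite -ab; apply: scalerI.
Qed.

Lemma effect_ge0 e w : effects Om e -> Om w -> 0 <= ev e w.
Proof. by move=> e_eff /e_eff /andP[]. Qed.

Lemma pos_cone_ev_ge0 e y :
  (forall w, Om w -> 0 <= ev e w) -> pos_cone Om y -> 0 <= ev e y.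
Proof. by move=> e_ge0 [l [w [l_ge0 [Om_w ->]]]]; rewrite evZr mulr_ge0 ?e_ge0. Qed.

Lemma pos_cone_ev_le e f y :
  (forall w, Om w -> ev e w <= ev f w) -> pos_cone Om y -> ev e y <= ev f y.
Proof.
move=> ef y_cone; rewrite -subr_ge0 -evBl.
by apply: pos_cone_ev_ge0 y_cone => w Om_w; rewrite evBl subr_ge0 ef.
Qed.

Lemma pos_cone_ev_eq0 e y : (forall w, Om w -> 0 < ev e w) ->
  pos_cone Om y -> ev e y = 0 -> y = 0.
Proof.
move=> e_gt0 [l [w [_ [Om_w ->]]]] /eqP.
by rewrite evZr mulf_eq0 (gt_eqF (e_gt0 w Om_w)) orbF => /eqP->; rewrite scale0r.
Qed.

Lemma pos_cone_bform_ge0 x y : pos_cone Om x -> pos_cone Om y -> 0 <= B x y.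
Proof. by move=> x_cone; rewrite Q_self_dual => /(_ x x_cone). Qed.

Lemma pos_cone_pointed y : pos_cone Om y -> pos_cone Om (- y) -> y = 0.
Proof.
move=> [l [w [l_ge0 [Om_w ->]]]] [l' [w' [l'_ge0 [Om_w' yl']]]].
have := congr1 (ev u) yl'; rewrite evNr !ev_unit_scale // => l_eq.
have -> : l = 0 by lra.
by rewrite scale0r.
Qed.

Lemma bform_nondegenerate z : (forall x, B x z = 0) -> z = 0.
Proof.
by move=> Bz0; apply: pos_cone_pointed; rewrite Q_self_dual => x _;
  rewrite ?bformNr Bz0 ?oppr0.
Qed.

Lemma bform_unitmx : Q \in unitmx.
Proof.
rewrite -row_free_unit; apply: inj_row_free => v vQ0.
by apply: bform_nondegenerate => x; rewrite bform_sym // /bform vQ0 ev0l.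
Qed.

Lemma bform_definite x : B x x = 0 -> x = 0.
Proof.
move=> /(bform_isotropic_orthogonal Q_sym Q_psd) Bx0.
by apply: bform_nondegenerate => y; rewrite bform_sym.
Qed.

Lemma state_bform_gt0 w : Om w -> 0 < B w w.
Proof.
move=> Om_w; rewrite lt_def Q_psd andbT.
by apply/eqP => /bform_definite w0; move: (state_neq0 Om_w); rewrite w0 eqxx.
Qed.

Definition rep e := e *m invmx Q.

Lemma bform_rep e w : B (rep e) w = ev e w.
Proof. by rewrite /bform /rep mulmxKV ?bform_unitmx. Qed.

Lemma rep_mulmx v : rep (v *m Q) = v.
Proof. by rewrite /rep mulmxK ?bform_unitmx. Qed.

Lemma repZ c e : rep (c *: e) = c *: rep e.
Proof. by rewrite /rep scalemxAl. Qed.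

Lemma rep_sum (I : finType) (es : I -> 'rV[R]_n) : rep (\sum_i es i) = \sum_i rep (es i).
Proof. by rewrite /rep mulmx_suml. Qed.

Lemma rep_eq0 e : rep e = 0 -> e = 0.
Proof. by move=> e0; rewrite -(mulmxKV bform_unitmx e) -/(rep e) e0 mul0mx. Qed.

Lemma ev_rep_sym e f : ev e (rep f) = ev f (rep e).
Proof. by rewrite -bform_rep bform_sym // bform_rep. Qed.

Lemma rep_pos_cone e : (forall w, Om w -> 0 <= ev e w) -> pos_cone Om (rep e).
Proof.
move=> e_ge0; rewrite Q_self_dual => x x_cone.
by rewrite bform_sym // bform_rep; apply: pos_cone_ev_ge0.
Qed.

Lemma bform_argmax_extreme c : Om c -> (forall w, Om w -> B w w <= B c c) ->
  extreme_point Om c.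
Proof.
move=> Om_c c_max; split=> // y z t Om_y Om_z /andP[t_gt0 t_lt1] c_eq.
suff yz : y = z.
  by move: c_eq; rewrite -yz -scalerDl subrKC scale1r.
apply/eqP; rewrite -subr_eq0; apply/eqP/bform_definite/eqP.
rewrite eq_le Q_psd andbT.
have tt_gt0 : 0 < t * (1 - t) by rewrite mulr_gt0 // subr_gt0.
rewrite -(pmulr_rle0 _ tt_gt0).
have := bform_convex_combE Q_sym t y z; rewrite -c_eq.
have := c_max y Om_y; have := c_max z Om_z; nra.
Qed.

Hypothesis Om_transitive : transitive_ss Om.
Hypothesis Q_invariant :
  forall T, GLset Om T -> forall x, B (x *m T) (x *m T) = B x x.

Lemma extreme_bform_eq x y : extreme_point Om x -> extreme_point Om y ->
  B x x = B y y.
Proof.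
by move=> x_ext y_ext; have [T [GL_T <-]] := Om_transitive x_ext y_ext; rewrite Q_invariant.
Qed.

Hypothesis Om_compact : compact Om.

Lemma bform_le_extreme om w : extreme_point Om om -> Om w -> B w w <= B om om.
Proof.
move=> om_ext Om_w.
have [c Om_c c_max] : exists2 c, c \in Om & forall w, w \in Om -> B w w <= B c c.
  apply: EVT_max_rV Om_compact _; first by exists om; case: om_ext.
  exact/continuous_subspaceT/continuous_bform_diag.
rewrite inE in Om_c; rewrite (extreme_bform_eq om_ext (bform_argmax_extreme Om_c _)).
  by apply: c_max; rewrite inE.
by move=> v Om_v; apply: c_max; rewrite inE.
Qed.

Lemma bform_extreme_max om w : extreme_point Om om -> Om w -> B om w <= B om om.
Proof.
move=> om_ext Om_w; have Om_om := om_ext.1.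
have := bform_CauchySchwarz Q_sym Q_psd om (state_bform_gt0 Om_w).
have := bform_le_extreme om_ext Om_w; have := state_bform_gt0 Om_om; nra.
Qed.

Lemma indecomposable_rep_extreme e l om : effects Om e -> indecomposable Om e ->
  0 < l -> Om om -> rep e = l *: om -> extreme_point Om om.
Proof.
move=> e_eff [_ e_indec] l_gt0 Om_om e_rep.
split=> // y z t Om_y Om_z /andP[t_gt0 t_lt1] om_eq.
have cone_effect (a : R) v : 0 <= a -> Om v -> forall w, Om w -> 0 <= ev ((a *: v) *m Q) w.
  move=> a_ge0 Om_v w Om_w; rewrite -/(B _ w) bform_sym //.
  by apply: pos_cone_bform_ge0; [exact: state_pos_cone | exists a, v].
have t1_gt0 : 0 < 1 - t by rewrite subr_gt0.
pose ey := ((l * t) *: y) *m Q; pose ez := ((l * (1 - t)) *: z) *m Q.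
have e_split : e = ey + ez.
  by rewrite -mulmxDl -!scalerA -scalerDr -om_eq -e_rep /rep mulmxKV ?bform_unitmx.
have ey_ge0 := cone_effect _ _ (mulr_ge0 (ltW l_gt0) (ltW t_gt0)) Om_y.
have ez_ge0 := cone_effect _ _ (mulr_ge0 (ltW l_gt0) (ltW t1_gt0)) Om_z.
have [[cy ey_eq] [cz ez_eq]] : (exists c, ey = c *: e) /\ (exists c, ez = c *: e).
  apply: (e_indec _ _ _ _ e_split) => w Om_w; have /andP[_ e_le1] := e_eff w Om_w.
    by rewrite ey_ge0 //= (le_trans _ e_le1) // e_split evDl lerDl ez_ge0.
  by rewrite ez_ge0 //= (le_trans _ e_le1) // e_split evDl lerDr ey_ge0.
have scaled_eq (a c : R) v : a != 0 -> Om v -> (a *: v) *m Q = c *: e -> v = om.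
  move=> a_neq0 Om_v /(congr1 rep); rewrite rep_mulmx repZ e_rep scalerA.
  exact: state_scale_inj.
split; [apply: (scaled_eq _ cy) ey_eq | apply: (scaled_eq _ cz) ez_eq] => //.
  by rewrite mulf_neq0 // gt_eqF.
by rewrite mulf_neq0 // gt_eqF.
Qed.

Lemma pure_effect_max_eq1 e w0 : pure_effect Om e -> e <> 0 -> Om w0 ->
  0 < ev e w0 -> (forall w, Om w -> ev e w <= ev e w0) -> ev e w0 = 1.
Proof.
move=> [e_eff e_ext] e_neq0 Om_w0 c_gt0 c_max; set c := ev e w0 in c_gt0 c_max *.
apply/eqP; rewrite eq_le (andP (e_eff _ Om_w0)).2 leNgt; apply/negP => c_lt1.
have e'_eff : effects Om (c^-1 *: e).
  move=> w Om_w; rewrite evZl pmulr_rge0 ?invr_gt0 // effect_ge0 //=.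
  by rewrite -(ler_pM2l c_gt0) mulrA mulfV ?gt_eqF // mul1r mulr1 c_max.
have zero_eff : effects Om 0 by move=> w _; rewrite ev0l lexx ler01.
have e_comb : e = c *: (c^-1 *: e) + (1 - c) *: 0.
  by rewrite scaler0 addr0 scalerA mulfV ?gt_eqF ?scale1r.
have c_in01 : 0 < c < 1 by rewrite c_gt0 c_lt1.
have [_ zero_e] := e_ext _ _ c e'_eff zero_eff c_in01 e_comb.
exact: e_neq0 (esym zero_e).
Qed.

(* When [rep e != 0], normalizing [rep e] gives a state on which [e] equals 1. *)
Definition sharp e := ev e (rep e) = ev u (rep e).

Lemma sharp_pure_indecomposable e : pure_effect Om e -> indecomposable Om e ->
  sharp e.
Proof.
move=> e_pure e_indec; have e_eff := e_pure.1.
have [l [om [l_ge0 [Om_om e_rep]]]] := rep_pos_cone (fun w => effect_ge0 (w:=w) e_eff).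
have l_gt0 : 0 < l.
  rewrite lt_def l_ge0 andbT; apply/eqP => l0; apply: e_indec.1.
  by apply: rep_eq0; rewrite e_rep l0 scale0r.
have om_ext := indecomposable_rep_extreme e_eff e_indec l_gt0 Om_om e_rep.
have e_om w : ev e w = l * B om w by rewrite -bform_rep e_rep bformZl.
rewrite /sharp e_rep evZr ev_unit_scale //.
suff -> : ev e om = 1 by rewrite mulr1.
apply: (pure_effect_max_eq1 e_pure e_indec.1 Om_om).
  by rewrite e_om mulr_gt0 ?state_bform_gt0.
by move=> w Om_w; rewrite !e_om ler_wpM2l ?bform_extreme_max // ltW.
Qed.

Section SharpSums.
Variables (I : finType) (es : I -> 'rV[R]_n).
Hypothesis es_sharp : forall i, effects Om (es i) /\ sharp (es i).
Hypothesis sum_le1 : forall w, Om w -> ev (\sum_i es i) w <= 1.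

Lemma ev_rep_sum_component i : ev (\sum_j es j) (rep (es i)) = ev u (rep (es i)).
Proof.
have [ei_eff ei_sharp] := es_sharp i.
have rep_cone := rep_pos_cone (fun w => effect_ge0 (w:=w) ei_eff).
apply/eqP; rewrite eq_le; apply/andP; split.
  by apply: pos_cone_ev_le rep_cone => w Om_w; rewrite u_unit ?sum_le1.
rewrite -ei_sharp ev_suml.
apply: (ler_sum_term (F := fun j => ev (es j) (rep (es i)))) => j.
exact: pos_cone_ev_ge0 (fun w => effect_ge0 (w:=w) (es_sharp j).1) rep_cone.
Qed.

Lemma sharp_sum : sharp (\sum_i es i).
Proof.
by rewrite /sharp rep_sum !ev_sumr; apply: eq_bigr => i _; apply: ev_rep_sum_component.
Qed.

Lemma sharp_compl : sharp (u - \sum_i es i).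
Proof.
rewrite /sharp evBl; suff -> : ev (\sum_i es i) (rep (u - \sum_i es i)) = 0 by rewrite subr0.
rewrite ev_rep_sym rep_sum ev_sumr big1 // => i _.
by rewrite evBl ev_rep_sum_component subrr.
Qed.

End SharpSums.

Lemma ideal_sharp (X : finType) (f : X -> 'rV[R]_n) a :
  ideal_observable Om u f -> sharp (f a).
Proof.
move=> [[f_eff _] f_decomp]; have [k [es [es_pi fa_eq]]] := f_decomp a.
have es_sharp i : effects Om (es i) /\ sharp (es i).
  have [es_pure es_indec] := es_pi i.
  by split; [exact: es_pure.1 | exact: sharp_pure_indecomposable].
case: fa_eq => fa_eq; rewrite fa_eq.
  apply: sharp_sum => // w Om_w.
  by have /andP[_] := f_eff a w Om_w; rewrite fa_eq.
apply: sharp_compl => // w Om_w.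
by have /andP[+ _] := f_eff a w Om_w; rewrite fa_eq evBl u_unit // subr_ge0.
Qed.

Lemma marginal1_effect (A B : finType) (M : A * B -> 'rV[R]_n) a :
  (forall p, effects Om (M p)) -> \sum_p M p = u -> effects Om (marginal1 M a).
Proof.
move=> M_eff M_sum w Om_w; rewrite /marginal1 ev_suml.
rewrite sumr_ge0 => [|b _]; last exact: effect_ge0.
rewrite -(u_unit Om_w) -M_sum ev_suml sum_prod /=.
apply: (ler_sum_term (F := fun a => \sum_b ev (M (a, b)) w)) => a'.
by apply: sumr_ge0 => b _; apply: effect_ge0.
Qed.

Lemma LE_le (X : finType) (f : X -> 'rV[R]_n) w a : LE f w <= 1 - ev (f a) w.
Proof. by rewrite lerB // le_bigmax. Qed.

Lemma ev_sub_le_Dinf (X : finType) (ft f : X -> 'rV[R]_n) w a :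
  (forall a, effects Om (ft a)) -> (forall a, effects Om (f a)) -> Om w ->
  ev (f a) w - ev (ft a) w <= Dinf Om ft f.
Proof.
move=> ft_eff f_eff Om_w.
have dist_le1 v b : Om v -> `|ev (ft b) v - ev (f b) v| <= 1.
  move=> Om_v; have /andP[? ?] := ft_eff b v Om_v; have /andP[? ?] := f_eff b v Om_v.
  by rewrite ler_norml; apply/andP; split; lra.
apply: (le_trans (y := `|ev (ft a) w - ev (f a) w|)); first by rewrite distrC ler_norm.
apply: (le_trans (y := \big[Num.max/0]_b `|ev (ft b) w - ev (f b) w|)); first exact: le_bigmax.
apply: ub_le_sup; last by exists w.
by exists 1 => _ [v [Om_v ->]]; apply: bigmax_le => // b _; apply: dist_le1.
Qed.

Lemma marginal_defect (A B : finType) (F : A -> 'rV[R]_n) (M : A * B -> 'rV[R]_n) :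
  ideal_observable Om u F -> (forall p, effects Om (M p)) -> \sum_p M p = u ->
  ev u (rep u) - \sum_p ev (F p.1) (rep (M p)) <=
  Dinf Om (marginal1 M) F * ev u (rep u).
Proof.
move=> F_ideal M_eff M_sum; have [[F_eff [F_sum _]] _] := F_ideal.
have U_split : ev u (rep u) = \sum_a ev u (rep (F a)).
  by rewrite -[in rep u]F_sum rep_sum ev_sumr.
have cross : \sum_p ev (F p.1) (rep (M p)) = \sum_a ev (marginal1 M a) (rep (F a)).
  rewrite sum_prod; apply: eq_bigr => a _; rewrite /marginal1 ev_suml.
  by apply: eq_bigr => b _; apply: ev_rep_sym.
rewrite U_split cross -sumrB mulr_sumr; apply: ler_sum => a _.
rewrite -{1}(ideal_sharp a F_ideal) -evBl -[_ * ev u _]evZl.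
apply: pos_cone_ev_le (rep_pos_cone (fun w => effect_ge0 (w:=w) (F_eff a))) => w Om_w.
rewrite evBl evZl u_unit // mulr1.
exact: ev_sub_le_Dinf (fun a => marginal1_effect a M_eff M_sum) F_eff Om_w.
Qed.

Lemma joint_defect_le0 (A B : finType) (F : A -> 'rV[R]_n) (G : B -> 'rV[R]_n)
    (M : A * B -> 'rV[R]_n) :
  ideal_observable Om u F -> ideal_observable Om u G ->
  (forall p, effects Om (M p)) -> \sum_p M p = u ->
  \sum_p ev ((2 - (Dinf Om (marginal1 M) F + Dinf Om (marginal2 M) G)) *: u
             - F p.1 - G p.2) (rep (M p)) <= 0.
Proof.
move=> F_ideal G_ideal M_eff M_sum.
have F_defect := marginal_defect F_ideal M_eff M_sum.
have G_defect := marginal_defect (M := fun p : B * A => M (p.2, p.1)) G_ideal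
  (fun p => M_eff (p.2, p.1)) (etrans (sum_swap M) M_sum).
rewrite (sum_swap (fun p => ev (G p.2) (rep (M p)))) in G_defect.
have U_split : ev u (rep u) = \sum_p ev u (rep (M p)) by rewrite -M_sum rep_sum ev_sumr.
under eq_bigr do rewrite !evBl evZl.
rewrite !sumrB -mulr_sumr -U_split.
by move: F_defect G_defect; lra.
Qed.

Lemma exists_state_LE_le (A B : finType) (F : A -> 'rV[R]_n) (G : B -> 'rV[R]_n)
    (M : A * B -> 'rV[R]_n) :
  ideal_observable Om u F -> ideal_observable Om u G ->
  (forall p, effects Om (M p)) -> \sum_p M p = u -> (exists w, Om w) ->
  exists w, Om w /\
    LE F w + LE G w <= Dinf Om (marginal1 M) F + Dinf Om (marginal2 M) G.
Proof.
move=> F_ideal G_ideal M_eff M_sum [w0 Om_w0]; apply: contrapT => no_state.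
have := joint_defect_le0 F_ideal G_ideal M_eff M_sum.
set D := Dinf _ _ _ + Dinf _ _ _ in no_state *.
set phi := fun p => (2 - D) *: u - F p.1 - G p.2 => sum_phi_le0.
have phi_gt0 p w : Om w -> 0 < ev (phi p) w.
  move=> Om_w; rewrite !evBl evZl u_unit // mulr1 ltNge; apply/negP => phi_le0.
  apply: no_state; exists w; split=> //.
  by have := LE_le F w p.1; have := LE_le G w p.2; lra.
have rep_M_cone p : pos_cone Om (rep (M p)).
  exact: rep_pos_cone (fun w => effect_ge0 (w:=w) (M_eff p)).
have phi_ge0 p : 0 <= ev (phi p) (rep (M p)).
  by apply: pos_cone_ev_ge0 (rep_M_cone p) => w Om_w; apply/ltW/phi_gt0.
have sum_phi0 : \sum_p ev (phi p) (rep (M p)) = 0.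
  by apply/eqP; rewrite eq_le sum_phi_le0 sumr_ge0.
have rep_M0 p : rep (M p) = 0.
  apply: (pos_cone_ev_eq0 (phi_gt0 p) (rep_M_cone p)).
  exact: psumr_eq0P (fun p _ => phi_ge0 p) sum_phi0 p isT.
have u0 : u = 0 by apply: rep_eq0; rewrite -M_sum rep_sum big1.
by have := u_unit Om_w0; rewrite u0 ev0l => /eqP; rewrite eq_sym oner_eq0.
Qed.

End SelfDualForm.

Section MatrixNorm.
Variable R : realType.

Lemma mx_entry_norm_le p q (M : 'M[R]_(p, q)) i j : `|M i j| <= `|M|.
Proof.
by rewrite [leRHS]/Num.norm /= mx_normrE; apply/bigmax_geP; right; exists (i, j).
Qed.

Lemma mx_norm_le p q (M : 'M[R]_(p, q)) c : 0 <= c ->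
  (forall i j, `|M i j| <= c) -> `|M| <= c.
Proof.
move=> c_ge0 M_le; rewrite [leLHS]/Num.norm /= mx_normrE.
by apply: bigmax_le => // -[i j] _; exact: M_le.
Qed.

Lemma rV_mulmx_norm_le n (v : 'rV[R]_n) (D : 'M[R]_n) : `|v *m D| <= n%:R * `|v| * `|D|.
Proof.
apply: mx_norm_le => [|i j]; first by rewrite !mulr_ge0.
rewrite mxE (le_trans (ler_norm_sum _ _ _)) //.
apply: (le_trans (y := \sum_(k < n) `|v| * `|D|)).
  by apply: ler_sum => k _; rewrite normrM ler_pM ?mx_entry_norm_le.
by rewrite sumr_const card_ord -mulrA mulr_natl.
Qed.

End MatrixNorm.

Section StateSpaceMaps.
Variables (R : realType) (n : nat) (Om : set 'rV[R]_n).
Hypothesis Om_compact : compact Om.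

Definition mx_into := [set T : 'M[R]_n | forall w, Om w -> Om (w *m T)].
Definition mx_onto := [set T : 'M[R]_n | forall w, Om w -> exists v, Om v /\ v *m T = w].

Lemma state_norm_bound : exists2 b, 0 <= b & forall w, Om w -> `|w| <= b.
Proof.
have [b [_ Om_b]] := compact_bounded Om_compact.
exists (`|b| + 1); first by rewrite addr_ge0.
move=> w Om_w; apply: (Om_b (`|b| + 1)) => //.
by have := ler_norm b; lra.
Qed.

Lemma GLset_into_onto : spans Om -> GLset Om = mx_into `&` mx_onto.
Proof.
move=> Om_spans; apply/seteqP; split=> T.
  move=> [_ T_img]; split=> w Om_w; first by rewrite -T_img; exists w.
  have [v Om_v vT] : ((fun w => w *m T) @` Om) w by rewrite T_img.
  by exists v.
move=> [T_into T_onto]; split.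
  rewrite -row_full_unit; apply/row_fullP.
  have preimage_e i : exists x : 'rV[R]_n, x *m T = 'e_i.
    have [k [p [c [Om_p ->]]]] := Om_spans 'e_i.
    have [vs vsT] := fin_all_exists (fun l => T_onto _ (Om_p l)).
    exists (\sum_l c l *: vs l); rewrite mulmx_suml.
    by apply: eq_bigr => l _; rewrite -scalemxAl (vsT l).2.
  have [xs xsT] := fin_all_exists preimage_e.
  by exists (\matrix_i xs i); apply/row_matrixP => i; rewrite row_mul rowK xsT row1.
apply/seteqP; split=> w; first by move=> [v Om_v <-]; exact: T_into.
by move=> /T_onto [v [Om_v vT]]; exists v.
Qed.

Lemma mx_into_entry_bound : spans Om ->
  exists C, forall T, mx_into T -> forall i j, `|T i j| <= C.
Proof.
move=> Om_spans; have [b b_ge0 Om_b] := state_norm_bound.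
have row_bound i : exists C : R, forall T, mx_into T -> forall j, `|T i j| <= C.
  have [k [p [c [Om_p e_i]]]] := Om_spans 'e_i.
  exists (\sum_l `|c l| * b) => T T_into j.
  have -> : T i j = (('e_i : 'rV[R]_n) *m T) 0 j by rewrite -rowE mxE.
  rewrite e_i mulmx_suml summxE (le_trans (ler_norm_sum _ _ _)) //.
  apply: ler_sum => l _; rewrite -scalemxAl mxE normrM ler_wpM2l //.
  exact: le_trans (mx_entry_norm_le _ 0 j) (Om_b _ (T_into _ (Om_p l))).
have [C C_bound] := fin_all_exists row_bound.
exists (\sum_i `|C i|) => T T_into i j.
apply: le_trans (C_bound i T T_into j) _.
exact: le_trans (ler_norm _) (ler_sum_term i (fun i => normr_ge0 (C i))).
Qed.

Lemma mx_into_closed : closed mx_into.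
Proof.
have -> : mx_into = \bigcap_(w in Om) ((fun T => w *m T) @^-1` Om).
  by apply/seteqP; split=> T /= T_into w Om_w; exact: T_into.
apply: closed_bigI => w Om_w; apply: preimage_closed; last first.
  exact: compact_closed (@norm_hausdorff _ _) Om_compact.
by move=> T _; exact: continuous_mulmxl.
Qed.

Lemma mx_onto_closed : closed mx_onto.
Proof.
(* Otherwise a ball around [w] misses the compact set [Om *m T]; but for [T'] in
   [mx_onto] close to [T], writing [w = v *m T'] puts [v *m T] inside that ball. *)
move=> T T_cl w Om_w; apply: contrapT => w_notin.
have img_closed : closed [set v *m T | v in Om].
  apply: compact_closed (@norm_hausdorff _ _) _.
  apply: continuous_compact Om_compact; apply: continuous_subspaceT.
  exact: continuous_mulmxr.
have [e e_gt0 e_ball] : exists2 e : R, 0 < e & ball w e `<=` ~` [set v *m T | v in Om].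
  apply/nbhs_ballP/open_nbhs_nbhs; split; first exact: closed_openC.
  by move=> [v Om_v vT]; apply: w_notin; exists v.
have [b b_ge0 Om_b] := state_norm_bound.
have nb1_gt0 : 0 < n%:R * b + 1 by rewrite ltr_wpDl // mulr_ge0.
set d := e / (n%:R * b + 1).
have [T' [T'_onto T'_near]] := T_cl _ (nbhsx_ballx T d (divr_gt0 e_gt0 nb1_gt0)).
have [v [Om_v vT']] := T'_onto w Om_w.
apply: (e_ball (v *m T)); last by exists v.
rewrite -ball_normE /ball_ /= -vT' -mulmxBr (le_lt_trans (rV_mulmx_norm_le _ _)) //.
have T'T_lt : `|T' - T| < d by move: T'_near; rewrite -ball_normE /ball_ /= distrC.
apply: (le_lt_trans (y := n%:R * b * d)).
  by apply: ler_pM; rewrite ?mulr_ge0 ?ler_wpM2l ?Om_b //; apply: ltW.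
by rewrite /d mulrA ltr_pdivrMr // mulrDr mulr1 [e * _]mulrC ltrDl.
Qed.

Lemma GLset_closed : spans Om -> closed (GLset Om).
Proof.
move=> Om_spans; rewrite GLset_into_onto //.
by apply: closedI; [exact: mx_into_closed | exact: mx_onto_closed].
Qed.

End StateSpaceMaps.

Section BorelMatrices.
Variables (R : realType) (n : nat).

Lemma closed_measurable_mx (D : set 'M[R]_n) : closed D -> measurable (D : set (Mx R n)).
Proof.
move=> D_closed; rewrite -(setCK D); apply: measurableC; apply: sub_sigma_algebra.
exact: closed_openC.
Qed.

Lemma continuous_measurable_mx (f : 'M[R]_n -> R) : continuous f ->
  measurable_fun setT (f : Mx R n -> R).
Proof.
move=> f_cont; apply: (measurability _ (RGenOpens.measurableE R)).
move=> _ [_ [a [b ->] <-]]; rewrite setTI; apply: sub_sigma_algebra.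
by move/continuousP : f_cont; apply; exact: interval_open.
Qed.

Lemma measurable_mulmxl (S : 'M[R]_n) :
  measurable_fun setT ((fun T : 'M[R]_n => S *m T) : Mx R n -> Mx R n).
Proof.
apply: (@measurability _ _ (Mx R n) (Mx R n) _ _ (@open 'M[R]_n)) => //.
move=> _ [A A_open <-]; rewrite setTI; apply: sub_sigma_algebra.
by move/continuousP : (continuous_mulmxl (r := n) (A := S)); apply.
Qed.

End BorelMatrices.

Lemma Rintegral_sum (d : measure_display) (T : measurableType d) (R : realType)
    (mu : measure T R) (I : finType) (f : I -> T -> R) :
  (forall i, mu.-integrable setT (EFin \o f i)) ->
  Rintegral mu setT (fun x => \sum_i f i x) = \sum_i Rintegral mu setT (f i).
Proof.
move=> f_int; rewrite /Rintegral sum_fine => [|i _]; last first.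
  exact: (integrable_fin_num measurableT (f_int i)).
rewrite -integral_sum //; congr fine; apply: eq_integral => x _.
by rewrite sumEFin.
Qed.

Section HaarGram.
Variables (R : realType) (n : nat) (Om : set 'rV[R]_n) (mu : probability (Mx R n) R).
Hypothesis Om_compact : compact Om.
Hypothesis Om_spans : spans Om.
Hypothesis mu_haar : haar_GL Om mu.

Lemma haar_mx_intoC : mu (~` (mx_into Om : set (Mx R n))) = 0%E.
Proof.
have GL_meas : measurable (GLset Om : set (Mx R n)).
  exact: closed_measurable_mx (GLset_closed Om_compact Om_spans).
have into_meas : measurable (mx_into Om : set (Mx R n)).
  exact: closed_measurable_mx (mx_into_closed Om_compact).
have GL_into : (GLset Om : set (Mx R n)) `<=` mx_into Om.
  by rewrite GLset_into_onto // => T [].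
suff into1 : mu (mx_into Om : set (Mx R n)) = 1%E by rewrite probability_setC // into1 subee.
apply/eqP; rewrite eq_le probability_le1 //= -mu_haar.1.
by apply: le_measure => //; rewrite inE.
Qed.

Lemma continuous_bounded_integrable (f : 'M[R]_n -> R) C : continuous f ->
  (forall T, mx_into Om T -> `|f T| <= C) ->
  mu.-integrable (setT : set (Mx R n)) (EFin \o f).
Proof.
move=> f_cont f_bound; have f_meas := continuous_measurable_mx f_cont.
apply/integrableP; split; first exact/measurable_EFinP.
apply: (le_lt_trans (integral_le_bound (`|C|%:E) _ _ _ _)) => //.
- exact/measurable_EFinP.
- exists (~` (mx_into Om : set (Mx R n))); split.
  + exact: measurableC (closed_measurable_mx (mx_into_closed Om_compact)).
  + exact: haar_mx_intoC.
  + move=> T /= T_gt T_into; apply: T_gt => _.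
    by rewrite lee_fin (le_trans (f_bound T T_into)) ?ler_norm.
- apply: lte_mul_pinfty => //.
  exact: le_lt_trans (probability_le1 mu measurableT) (ltry 1).
Qed.

Definition haar_gram : 'M[R]_n :=
  \matrix_(i, j) Rintegral mu setT (fun T : Mx R n => ((T : 'M[R]_n) *m T^T) i j).

Lemma haar_gram_entry_integrable i j :
  mu.-integrable (setT : set (Mx R n)) (EFin \o fun T : 'M[R]_n => (T *m T^T) i j).
Proof.
have [C C_bound] := mx_into_entry_bound Om_compact Om_spans.
apply: (continuous_bounded_integrable (C := n%:R * (C * C))).
  by apply/continuous_mx_entry/continuous_mulmx => [X|]; last exact: continuous_trmx.
move=> T T_into; rewrite mxE (le_trans (ler_norm_sum _ _ _)) //.
apply: (le_trans (y := \sum_(k < n) C * C)).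
  by apply: ler_sum => k _; rewrite mxE normrM ler_pM ?C_bound.
by rewrite sumr_const card_ord mulr_natl.
Qed.

Lemma ipGL_haar_gram x y : ipGL mu x y = bform haar_gram x y.
Proof.
rewrite /ipGL bform_expand.
under eq_Rintegral do rewrite dotE_mulmx bform_expand.
rewrite Rintegral_sum => [|p]; last first.
  move: (integrableZl measurableT (x 0 p.1 * y 0 p.2) (haar_gram_entry_integrable p.1 p.2)).
  exact: eq_integrable.
by apply: eq_bigr => p _; rewrite RintegralZl ?haar_gram_entry_integrable // mxE.
Qed.

Lemma haar_gram_sym : haar_gram^T = haar_gram.
Proof.
apply/matrixP => i j; rewrite !mxE; apply: eq_Rintegral => T _.
by rewrite !mxE; apply: eq_bigr => k _; rewrite !mxE mulrC.
Qed.

Lemma haar_gram_psd x : 0 <= bform haar_gram x x.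
Proof.
rewrite -ipGL_haar_gram; apply: Rintegral_ge0 => T _.
by apply: sumr_ge0 => i _; rewrite -expr2 sqr_ge0.
Qed.

Lemma haar_gram_invariant S : GLset Om S ->
  forall x, bform haar_gram (x *m S) (x *m S) = bform haar_gram x x.
Proof.
move=> GL_S x; rewrite -!ipGL_haar_gram /ipGL.
pose sq (T : 'M[R]_n) := dotE (x *m T) (x *m T).
have sq_cont : continuous sq.
  apply: continuous_sum => i.
  have xT_cont := continuous_mx_entry (i:=0) (j:=i) (continuous_mulmxl (r := n) (A := x)).
  by move=> T; exact: continuousM (xT_cont T) (xT_cont T).
have sq_meas : measurable_fun setT (EFin \o sq : Mx R n -> \bar R).
  by apply/measurable_EFinP; exact: continuous_measurable_mx.
have sq_ge0 : {in setT, forall T : Mx R n, (0 <= (EFin \o sq) T)%E}.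
  by move=> T _; rewrite lee_fin; apply: sumr_ge0 => i _; rewrite -expr2 sqr_ge0.
under eq_Rintegral do rewrite -mulmxA.
rewrite /Rintegral; congr fine.
have := ge0_integral_pushforward (measurable_mulmxl S) mu measurableT sq_meas sq_ge0.
rewrite preimage_setT => <-.
apply: eq_measure_integral => [|mS A A_meas _]; first exact: measurable_mulmxl.
by rewrite /pushforward; exact: mu_haar.2 S GL_S A A_meas.
Qed.

End HaarGram.

Lemma spans_nonempty (R : realType) (N : nat) (Om : set 'rV[R]_N.+1) :
  spans Om -> exists w, Om w.
Proof.
move=> Om_spans; have [k [p [c [Om_p one_eq]]]] := Om_spans (const_mx 1).
case: k p c Om_p one_eq => [|k] p c Om_p one_eq.
  move/(congr1 (fun v : 'rV[R]_N.+1 => v 0 0)): one_eq.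
  by rewrite big_ord0 !mxE => /eqP; rewrite oner_eq0.
by exists (p ord0).
Qed.

Theorem theorem3p2 (R : realType) (N : nat) (Om : set 'rV[R]_N.+1)
  (u : 'rV[R]_N.+1) (mu : probability (Mx R N.+1) R)
  (A B : finType) (F : A -> 'rV[R]_N.+1) (G : B -> 'rV[R]_N.+1)
  (M : (A * B)%type -> 'rV[R]_N.+1) :
  state_space Om -> unit_effect Om u -> haar_GL Om mu ->
  transitive_ss Om -> self_dual Om mu ->
  ideal_observable Om u F -> ideal_observable Om u G ->
  observable Om u M ->
  exists w, Om w /\
    LE F w + LE G w <= Dinf Om (marginal1 M) F + Dinf Om (marginal2 M) G.
Proof.
move=> [Om_compact [_ [Om_spans _]]] u_unit mu_haar Om_transitive mu_self_dual.
move=> F_ideal G_ideal [M_eff [M_sum _]].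
have ipGL_gram : ipGL mu = bform (haar_gram mu).
  by apply/funext => x; apply/funext => y; rewrite (ipGL_haar_gram Om_compact Om_spans mu_haar).
rewrite /self_dual ipGL_gram in mu_self_dual.
have gram_psd := haar_gram_psd Om_compact Om_spans mu_haar.
have gram_invariant := haar_gram_invariant Om_compact Om_spans mu_haar.
exact: (exists_state_LE_le (haar_gram_sym mu) gram_psd mu_self_dual u_unit Om_transitive
  gram_invariant Om_compact F_ideal G_ideal M_eff M_sum (spans_nonempty Om_spans)).
Qed.
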